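(* Let $X$ be a nonempty compact convex subset of $\mathbb{R}^n$, let $\varphi:X\to\mathbb{R}$ be upper semicontinuous and strongly concave on $X$ with modulus $c>0$, and let $\psi:X\to\mathbb{R}$ be Lipschitz continuous with constant $L_\psi$ with respect to the Euclidean norm. Then $\varphi$ attains its maximum on $X$ at a unique point $x_0$, and for every $\delta\geq0$, \[ \Big|\sup_{x\in X}\big(\varphi(x)+\delta\psi(x)\big)-\big(\varphi(x_0)+\delta\psi(x_0)\big)\Big|\leq L_\psi\,\delta\sqrt{\frac{2\delta M}{c}}, \] where $M=\sup_X\psi-\inf_X\psi$.
   Context: $\varphi$ is strongly concave on $X$ with modulus $c$ if $-\varphi-\frac c2\|\cdot\|_2^2$ is convex on $X$. *)

From HB Require Import structures.
From mathcomp Require Import all_boot all_order all_algebra.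
From mathcomp Require Import all_classical all_reals all_analysis.
Set Implicit Arguments. Unset Strict Implicit. Unset Printing Implicit Defensive.
Import Order.TTheory GRing.Theory Num.Theory.
Import numFieldNormedType.Exports.
Local Open Scope classical_set_scope.
Local Open Scope ring_scope.

Definition enorm {R : realType} {n : nat} (x : 'rV[R]_n) : R :=
  Num.sqrt (\sum_(i < n) x ord0 i ^+ 2).

Definition convex_subset {R : realType} {n : nat} (X : set 'rV[R]_n) : Prop :=
  forall x y (t : R), X x -> X y -> 0 <= t <= 1 -> X (t *: x + (1 - t) *: y).

Definition convex_fun_on {R : realType} {n : nat} (X : set 'rV[R]_n)
  (f : 'rV[R]_n -> R) : Prop :=
  forall x y (t : R), X x -> X y -> 0 <= t <= 1 ->
    f (t *: x + (1 - t) *: y) <= t * f x + (1 - t) * f y.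

Definition strongly_concave_on {R : realType} {n : nat} (X : set 'rV[R]_n)
  (phi : 'rV[R]_n -> R) (c : R) : Prop :=
  convex_fun_on X (fun x => - phi x - c / 2 * enorm x ^+ 2).

Definition usc_on_set {R : realType} {n : nat} (X : set 'rV[R]_n)
  (phi : 'rV[R]_n -> R) : Prop :=
  forall x, X x -> forall e : R, 0 < e ->
    \forall y \near x, X y -> phi y < phi x + e.

Definition euclid_lipschitz_on {R : realType} {n : nat} (X : set 'rV[R]_n)
  (psi : 'rV[R]_n -> R) (L : R) : Prop :=
  forall x y, X x -> X y -> `|psi x - psi y| <= L * enorm (x - y).

From HB Require Import structures.
From mathcomp Require Import all_boot all_order all_algebra.
From mathcomp Require Import all_classical all_reals all_analysis.
From mathcomp Require Import ring lra.
Import Order.TTheory GRing.Theory Num.Theory.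
Import numFieldNormedType.Exports.
Local Open Scope classical_set_scope.
Local Open Scope ring_scope.

(* Strong concavity gives quadratic growth [phi x0 - phi x >= c/2 |x - x0|^2]
   around the maximiser [x0], which exists by upper semicontinuity on a compact
   set and is unique by this growth.  A point [x] can beat [x0] for
   [phi + delta psi] only if [c/2 |x - x0|^2 <= delta (psi x - psi x0) <= delta M],
   i.e. [|x - x0| <= sqrt (2 delta M / c)], and then its gain is at most
   [delta L |x - x0|]. *)

Section EuclideanNorm.
Context {R : realType} {n : nat}.
Implicit Types x y : 'rV[R]_n.

Lemma sqr_enorm x : enorm x ^+ 2 = \sum_(i < n) x ord0 i ^+ 2.
Proof. by rewrite sqr_sqrtr // sumr_ge0 // => i _; rewrite sqr_ge0. Qed.

Lemma enorm_ge0 x : 0 <= enorm x.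
Proof. exact: sqrtr_ge0. Qed.

Lemma enorm_eq0 x : (enorm x == 0) = (x == 0).
Proof.
rewrite -(sqrf_eq0 (enorm x)) sqr_enorm psumr_eq0 => [|i _]; last exact: sqr_ge0.
apply/allP/idP => [x_eq0|/eqP-> i _].
  apply/eqP/rowP => i; rewrite mxE; apply/eqP.
  by rewrite -sqrf_eq0; exact: x_eq0 (mem_index_enum i).
by rewrite mxE sqrf_eq0 eqxx.
Qed.

Lemma sqr_enorm_convex_comb x y t :
  t * enorm x ^+ 2 + (1 - t) * enorm y ^+ 2 - enorm (t *: x + (1 - t) *: y) ^+ 2
  = t * (1 - t) * enorm (x - y) ^+ 2.
Proof.
rewrite !sqr_enorm !mulr_sumr -!big_split /= -sumrN -big_split /=.
by apply: eq_bigr => i _; rewrite !mxE; ring.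
Qed.

Lemma enorm_le_sqrt_dim_norm x : enorm x <= Num.sqrt n%:R * `|x|.
Proof.
rewrite -[`|x|]ger0_norm // -sqrtr_sqr -sqrtrM // ler_wsqrtr //.
have -> : n%:R * `|x| ^+ 2 = \sum_(i < n) `|x| ^+ 2.
  by rewrite sumr_const card_ord mulr_natl.
apply: ler_sum => i _.
rewrite -real_normK ?num_real // lerXn2r ?nnegrE //.
by rewrite -[`|x|]/(mx_norm x) mx_normrE; apply: (le_bigmax _ _ (ord0, i)).
Qed.

End EuclideanNorm.

Lemma le_of_forall_mulr {R : realFieldType} (a b : R) :
  (forall s, 0 <= s < 1 -> s * b <= a) -> b <= a.
Proof.
move=> le_sb_a; have a_ge0 : 0 <= a by have := le_sb_a 0; rewrite lexx ltr01 mul0r; apply.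
rewrite leNgt; apply/negP => lt_ab; have b_gt0 : 0 < b := le_lt_trans a_ge0 lt_ab.
have s01 : 0 <= (a + b) / (2 * b) < 1.
  rewrite divr_ge0 ?addr_ge0 ?mulr_ge0 ?(ltW b_gt0) //= ltr_pdivrMr ?mulr_gt0 //.
  by rewrite mul1r; lra.
have := le_sb_a _ s01.
have -> : (a + b) / (2 * b) * b = (a + b) / 2 by field; rewrite gt_eqF.
lra.
Qed.

Section StronglyConcave.
Context {R : realType} {n : nat} {X : set 'rV[R]_n} {phi : 'rV[R]_n -> R} {c : R}.
Hypotheses (convX : convex_subset X) (concave_phi : strongly_concave_on X phi c).

Lemma strongly_concave_on_le x y t : X x -> X y -> 0 <= t <= 1 ->
  t * phi x + (1 - t) * phi y + c / 2 * (t * (1 - t) * enorm (x - y) ^+ 2)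
  <= phi (t *: x + (1 - t) *: y).
Proof.
move=> Xx Xy t01; have := concave_phi x y t Xx Xy t01.
rewrite -sqr_enorm_convex_comb; lra.
Qed.

Context {x0 : 'rV[R]_n}.
Hypotheses (Xx0 : X x0) (x0_max : forall x, X x -> phi x <= phi x0).

Lemma maximizer_quadratic_growth x : X x ->
  c / 2 * enorm (x - x0) ^+ 2 <= phi x0 - phi x.
Proof.
(* Compare [x0] with [(1 - s) x + s x0], divide by [1 - s] and let [s -> 1]. *)
move=> Xx; apply: le_of_forall_mulr => s /andP[s_ge0 s_lt1].
have t01 : 0 <= 1 - s <= 1 by apply/andP; split; lra.
have le_comb := strongly_concave_on_le x x0 (1 - s) Xx Xx0 t01.
have le_x0 := x0_max _ (convX x x0 (1 - s) Xx Xx0 t01).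
have : (1 - s) * (s * (c / 2 * enorm (x - x0) ^+ 2)) <= (1 - s) * (phi x0 - phi x).
  lra.
by rewrite ler_pM2l // subr_gt0.
Qed.

Lemma maximizer_unique y : 0 < c -> X y ->
  (forall x, X x -> phi x <= phi y) -> y = x0.
Proof.
move=> c_gt0 Xy y_max; apply/eqP; rewrite -subr_eq0 -enorm_eq0 -sqrf_eq0.
have : c / 2 * enorm (y - x0) ^+ 2 <= 0.
  by apply: le_trans (maximizer_quadratic_growth y Xy) _; rewrite subr_le0 y_max.
by rewrite pmulr_rle0 ?divr_gt0 // => le0; rewrite eq_le le0 sqr_ge0.
Qed.

End StronglyConcave.

Lemma seq_argmax {R : realDomainType} {I : eqType} (g : I -> R) {s : seq I} {i0 : I} :
  i0 \in s -> exists2 i, i \in s & forall j, j \in s -> g j <= g i.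
Proof.
elim: s i0 => // a [|b s] IH i0 _.
  by exists a; rewrite ?mem_head // => j; rewrite inE => /eqP ->.
have [i i_s i_max] := IH b (mem_head b s).
have [le_ai|lt_ia] := leP (g a) (g i).
- exists i; first by rewrite inE i_s orbT.
  by move=> j; rewrite inE => /predU1P[->|/i_max].
- exists a; first exact: mem_head.
  move=> j; rewrite inE => /predU1P[->//|/i_max le_ji].
  exact: le_trans le_ji (ltW lt_ia).
Qed.

Lemma usc_attains_max {R : realType} {n : nat} {X : set 'rV[R]_n}
    {phi : 'rV[R]_n -> R} :
  X !=set0 -> compact X -> usc_on_set X phi ->
  exists x0, X x0 /\ forall x, X x -> phi x <= phi x0.
Proof.
move=> [x1 Xx1] cX usc; apply: contrapT => no_max.
have better x : X x -> exists2 y, X y & phi x < phi y.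
  move=> Xx; apply: contrapT => no_better; apply: no_max; exists x; split=> // y Xy.
  by rewrite leNgt; apply/negP => lt_xy; apply: no_better; exists y.
(* The open sets [U y] cover [X]; a finite subcover is absurd at its best [y]. *)
pose U y := interior [set z | X z -> phi z < phi y].
have X_cover : X `<=` cover X U.
  move=> x Xx; have [y Xy lt_xy] := better x Xx; exists y => //.
  have e_gt0 : 0 < phi y - phi x by rewrite subr_gt0.
  by apply: filterS (usc x Xx _ e_gt0) => z lt_z Xz; have := lt_z Xz; lra.
rewrite compact_cover in cX.
have [D D_X D_cover] := cX _ X U (fun y _ => open_interior _) X_cover.
have [y1 y1_D _] := D_cover x1 Xx1.
have [y y_D y_max] := seq_argmax phi y1_D.
have Xy : X y by have := D_X y y_D; rewrite in_setE.
have [z z_D /interior_subset /(_ Xy)] := D_cover y Xy.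
by have := y_max z z_D; lra.
Qed.

Section Lipschitz.
Context {R : realType} {n : nat} {X : set 'rV[R]_n} {psi : 'rV[R]_n -> R} {L : R}.
Hypothesis lip : euclid_lipschitz_on X psi L.

Lemma euclid_lipschitz_on_lt0_eq x y : L < 0 -> X x -> X y -> x = y.
Proof.
move=> L_lt0 Xx Xy; apply/eqP; rewrite -subr_eq0 -enorm_eq0 eq_le enorm_ge0 andbT.
by have := le_trans (normr_ge0 _) (lip x y Xx Xy); rewrite nmulr_rge0.
Qed.

Lemma euclid_lipschitz_on_bounded x0 : compact X -> X x0 ->
  exists K, forall x, X x -> `|psi x| <= K.
Proof.
move=> cX Xx0; have [M [_ M_bound]] := compact_bounded cX.
have /M_bound X_bound : M < `|M| + 1 by have := ler_norm M; lra.
exists (`|psi x0| + `|L| * (Num.sqrt n%:R * (2 * (`|M| + 1)))) => x Xx.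
have le_x_x0 : `|x - x0| <= 2 * (`|M| + 1).
  apply: le_trans (ler_normB _ _) _.
  by have /= := X_bound x Xx; have /= := X_bound x0 Xx0; lra.
have le_enorm := le_trans (enorm_le_sqrt_dim_norm (x - x0))
  (ler_wpM2l (sqrtr_ge0 _) le_x_x0).
have le_lip : L * enorm (x - x0) <= `|L| * enorm (x - x0).
  by rewrite ler_wpM2r ?enorm_ge0 ?ler_norm.
have := ler_wpM2l (normr_ge0 L) le_enorm.
have := lip x x0 Xx Xx0; have := ler_normD (psi x0) (psi x - psi x0).
rewrite [psi x0 + _]addrC subrK; lra.
Qed.

End Lipschitz.

Lemma quadratic_growth_gap_le {R : rcfType} {a d r c L M delta : R} :
  0 < c -> 0 <= L -> 0 <= delta -> 0 <= r ->
  c / 2 * r ^+ 2 <= a -> d <= L * r -> d <= M ->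
  delta * d - a <= L * delta * Num.sqrt (2 * delta * M / c).
Proof.
move=> c_gt0 L_ge0 delta_ge0 r_ge0 growth le_d_Lr le_dM.
have [gap_le0|gap_gt0] := lerP (delta * d - a) 0.
  by apply: le_trans gap_le0 _; rewrite !mulr_ge0 ?sqrtr_ge0.
have le_delta_d : delta * d <= delta * M by rewrite ler_wpM2l.
have le_r : r <= Num.sqrt (2 * delta * M / c).
  rewrite -[r]ger0_norm // -sqrtr_sqr ler_wsqrtr // ler_pdivlMr //; lra.
have a_ge0 : 0 <= a by apply: le_trans growth; rewrite mulr_ge0 ?sqr_ge0 ?divr_ge0 ?ltW.
have : delta * d <= delta * (L * r) by rewrite ler_wpM2l.
have : delta * (L * r) <= delta * (L * Num.sqrt (2 * delta * M / c)).
  by rewrite ler_wpM2l // ler_wpM2l.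
lra.
Qed.

Lemma sup_dist_le {R : realType} {S : set R} {v B : R} :
  S v -> ubound S (v + B) -> `|sup S - v| <= B.
Proof.
move=> Sv ubS; have le_v_sup : v <= sup S by apply: ub_le_sup => //; exists (v + B).
have : sup S <= v + B by apply: ge_sup => //; exists v.
by rewrite ger0_norm ?subr_ge0 //; lra.
Qed.

Lemma sub_le_sup_inf {R : realType} {A : set R} {a b : R} :
  has_ubound A -> has_lbound A -> A a -> A b -> a - b <= sup A - inf A.
Proof. by move=> ubA lbA Aa Ab; apply: lerB; [exact: ub_le_sup | exact: ge_inf]. Qed.

Theorem corollary5p13 (R : realType) (n : nat) (X : set 'rV[R]_n)
  (phi psi : 'rV[R]_n -> R) (c Lpsi : R) :
  X !=set0 -> compact X -> convex_subset X ->
  usc_on_set X phi -> 0 < c -> strongly_concave_on X phi c ->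
  euclid_lipschitz_on X psi Lpsi ->
  exists x0, [/\ X x0, (forall x, X x -> phi x <= phi x0),
    (forall y, X y -> (forall x, X x -> phi x <= phi y) -> y = x0) &
    forall delta : R, 0 <= delta ->
      `| sup [set phi x + delta * psi x | x in X] - (phi x0 + delta * psi x0) |
      <= Lpsi * delta * Num.sqrt (2 * delta *
           (sup [set psi x | x in X] - inf [set psi x | x in X]) / c)].
Proof.
move=> X_neq0 cX convX usc c_gt0 concave_phi lip.
have [x0 [Xx0 x0_max]] := usc_attains_max X_neq0 cX usc.
exists x0; split => // [y|delta delta_ge0].
  exact (maximizer_unique convX concave_phi Xx0 x0_max y c_gt0).
have [L_lt0|L_ge0] := ltP Lpsi 0.
  have -> : X = [set x0].
    apply/seteqP; split=> [x Xx|_ ->] //.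
    exact: euclid_lipschitz_on_lt0_eq lip x x0 L_lt0 Xx Xx0.
  by rewrite !image_set1 !sup1 inf1 !subrr normr0 mulr0 mul0r sqrtr0 mulr0.
have [K psi_le] := euclid_lipschitz_on_bounded lip x0 cX Xx0.
have ub_psi : has_ubound [set psi x | x in X].
  by exists K => _ [x Xx <-]; have := psi_le x Xx; rewrite ler_norml => /andP[].
have lb_psi : has_lbound [set psi x | x in X].
  exists (- K) => _ [x Xx <-]; have := psi_le x Xx; rewrite ler_norml => /andP[].
  by rewrite lerNl.
have psiX y : X y -> [set psi x | x in X] (psi y) by exists y.
apply: sup_dist_le; first by exists x0.
move=> _ [x Xx <-].
have := quadratic_growth_gap_le c_gt0 L_ge0 delta_ge0 (enorm_ge0 (x - x0))
  (maximizer_quadratic_growth convX concave_phi Xx0 x0_max x Xx)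
  (le_trans (ler_norm _) (lip x x0 Xx Xx0))
  (sub_le_sup_inf ub_psi lb_psi (psiX x Xx) (psiX x0 Xx0)).
lra.
Qed.
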